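(* Let $\theta>1$, $r\in(\theta^{-1},\theta^{-1/2}]$ and $s=\max\big(1,\frac{\ln\theta}{\ln(r\theta)}-2\big)$. Let $(P_1,\dots,P_n)$ be a random price sequence with values in $[1,\theta]$ whose maximum $P^*$ has law $F$, and let $Y$ be a random prediction with law $G$ on $[1,\theta]$, independent of the prices. Define $\Lambda(z)=\int\mathcal{E}(z,y)^s\,\mathrm{d}G(y)$ and $\Upsilon(y)=\frac{\int z\,\mathcal{E}(z,y)^s\,\mathrm{d}F(z)}{\mathbb{E}[P^*]}$. Then \[ \frac{\mathbb{E}[\mathsf{A}^1_r(P,Y)]}{\mathbb{E}[P^*]}\ \ge\ \frac1{r\theta}\int\Upsilon(y)\,\mathrm{d}G(y)\ =\ \frac{1}{r\theta}\int\frac{z\,\Lambda(z)}{\mathbb{E}[P^*]}\,\mathrm{d}F(z). \]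
   Context: One-max search: fix $\theta>1$. Prices $p_1,\dots,p_n\in[1,\theta]$ are revealed one at a time; the algorithm receives at the start a prediction $y\in[1,\theta]$ of the maximum price. At each step it irrevocably accepts the current price (payoff = that price) or rejects it; if nothing is accepted the payoff is $1$. Let $\varphi_r(z)=\frac{r\theta-1}{1-r}+\frac{1-r^2\theta}{1-r}\cdot\frac{z}{r\theta}$ and $\Phi^1_r(z)=\max(r\theta,\varphi_r(z))$; $\mathsf{A}^1_r$ accepts the first price $p_i\ge\Phi^1_r(y)$, and $\mathsf{A}^1_r(P,Y)$ is its payoff on the realized prices and prediction. $\mathcal{E}(a,b)=\min\{a/b,b/a\}$. *)

From mathcomp Require Import all_boot all_order all_algebra.
From mathcomp Require Import all_classical all_reals all_analysis.
Set Implicit Arguments. Unset Strict Implicit. Unset Printing Implicit Defensive.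
Import Order.TTheory GRing.Theory Num.Theory.
Local Open Scope ring_scope.

Section OneMax.
Variable R : realType.

Definition phi_r (theta r z : R) : R :=
  (r * theta - 1) / (1 - r) + (1 - r ^+ 2 * theta) / (1 - r) * (z / (r * theta)).

Definition Phi1 (theta r z : R) : R := Num.max (r * theta) (phi_r theta r z).

Fixpoint accept_first (thr : R) (s : seq R) : R :=
  match s with
  | [::] => 1
  | x :: s' => if thr <= x then x else accept_first thr s'
  end.

(* A^1_r(P, Y): payoff of the algorithm on prices x_0,...,x_{n-1} (revealed
   in this order) with prediction y *)
Definition A1 (theta r : R) (n : nat) (x : 'I_n -> R) (y : R) : R :=
  accept_first (Phi1 theta r y) [seq x i | i <- enum 'I_n].

Definition Ecomp (a b : R) : R := Num.min (a / b) (b / a).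

(* the maximum price (n >= 1 in the statement; all prices are >= 1) *)
Definition maxprice (n : nat) (x : 'I_n -> R) : R := \big[Num.max/1]_(i < n) x i.

Definition s_exp (theta r : R) : R := Num.max 1 (ln theta / ln (r * theta) - 2).

End OneMax.

From mathcomp Require Import all_boot all_order all_algebra.
From mathcomp Require Import all_classical all_reals all_analysis.
From mathcomp Require Import measurable_realfun.
From mathcomp.algebra_tactics Require Import ring lra.
Import Order.TTheory GRing.Theory Num.Theory.
Local Open Scope ring_scope.
Local Open Scope classical_set_scope.

(* Write z for the maximum price, y for the prediction and E := E(z, y).  The
   core is the pointwise bound z E^s <= r theta A^1_r for y in [1, theta].  If
   the algorithm accepts a price p >= Phi^1_r(y) >= phi_r(y), then
   z E^s <= y <= r theta phi_r(y) <= r theta p.  Otherwise z < Phi^1_r(y), so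
   either z <= r theta, or z < phi_r(y) <= y and E = z / y; in the latter case
   z^(s+1) <= r theta y^s follows from the convexity of t |-> t^(s+1): on
   [r theta, theta], phi_r(y) / y and r theta / y are the same convex
   combinations of 1 and (r theta)^-1, resp. of 1 and r, and
   (r theta)^-(s+1) <= r is exactly the choice of s.  Integrating the
   pointwise bound against the product law of prices and prediction (which
   only charges y in [1, theta]) gives E[A^1_r] >= E[P* E(P*, Y)^s] / (r theta),
   and Tonelli together with the fact that F is the law of P* identifies
   E[P* E(P*, Y)^s] / E[P*] with both integrals of the statement. *)

Section powR_facts.
Context {R : realType}.

Lemma powR_conv_le (p t x y : R) :
  1 <= p -> 0 <= t <= 1 -> 0 <= x -> 0 <= y ->
  (t * x + (1 - t) * y) `^ p <= t * x `^ p + (1 - t) * y `^ p.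
Proof.
move=> p1 /andP[t0 t1] x0 y0.
have := @convex_powR R p p1 (Itv01 t0 t1) x y.
by rewrite !convRE; apply; rewrite inE /= in_itv /= andbT.
Qed.

Lemma powR_le1 (a s : R) : a <= 1 -> 0 <= s -> a `^ s <= 1.
Proof.
move=> a1 s0; rewrite /powR; case: ifPn => _; first by case: (s == 0).
by rewrite expR_le1 mulr_ge0_le0 // ln_le0.
Qed.

End powR_facts.

Section Ecomp.
Context {R : realType}.

Lemma Ecomp_le1 (z y : R) : Ecomp z y <= 1.
Proof.
rewrite /Ecomp -[y / z]invf_div; have [|q_gt1] := leP (z / y) 1.
  by rewrite ge_min => ->.
by rewrite ge_min invf_le1 ?(ltW q_gt1) ?orbT // (lt_trans ltr01 q_gt1).
Qed.

Lemma Ecomp_gt0 (z y : R) : 0 < z -> 0 < y -> 0 < Ecomp z y.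
Proof. by move=> z0 y0; rewrite lt_min !divr_gt0. Qed.

Lemma EcompE (z y : R) : 0 < z <= y -> Ecomp z y = z / y.
Proof.
case/andP=> z0 zy; have y0 := lt_le_trans z0 zy; apply: min_l.
by rewrite (@le_trans _ _ 1) // (ler_pdivrMr, ler_pdivlMr) // mul1r.
Qed.

Lemma Ecomp_powR_ge0_le1 (s z y : R) : 0 <= s -> 0 <= Ecomp z y `^ s <= 1.
Proof. by move=> s0; rewrite powR_ge0 powR_le1 ?Ecomp_le1. Qed.

Lemma mulr_Ecomp_powR_le (s z y : R) : 1 <= s -> 0 < z -> 0 < y ->
  z * Ecomp z y `^ s <= Num.min z y.
Proof.
move=> s1 z0 y0; have E0 := Ecomp_gt0 _ _ z0 y0.
have Es_le : Ecomp z y `^ s <= Ecomp z y by rewrite ge1r_powR ?E0 ?Ecomp_le1.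
rewrite le_min; apply/andP; split.
  by rewrite ler_piMr ?(ltW z0) // (le_trans Es_le) ?Ecomp_le1.
by rewrite -ler_pdivlMl // (le_trans Es_le) // mulrC ge_min lexx orbT.
Qed.

End Ecomp.

Section one_max.
Context {R : realType}.

Lemma accept_firstP (thr : R) (l : seq R) :
  (accept_first thr l = 1 /\ all (fun x => x < thr) l) \/
  (thr <= accept_first thr l /\ accept_first thr l \in l).
Proof.
elim: l => [|x l IH] /=; first by left.
case: ifPn => [x_ge|]; first by right; rewrite mem_head.
rewrite -ltNge => x_lt; case: IH => [[-> ->]|[thr_le in_l]].
  by left; rewrite x_lt.
by right; rewrite in_cons in_l orbT.
Qed.

Lemma maxprice_in n (x : 'I_n -> R) (a b : R) :
  a <= 1 <= b -> (forall i, a <= x i <= b) -> a <= maxprice x <= b.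
Proof.
rewrite /maxprice => ab x_in; apply: (big_ind (fun v => a <= v <= b)) => // u v.
by move=> /andP[au ub] /andP[av vb]; rewrite le_max au ge_max ub vb.
Qed.

Lemma maxprice_lt n (x : 'I_n -> R) (c : R) :
  1 < c -> (forall i, x i < c) -> maxprice x < c.
Proof.
rewrite /maxprice => c1 x_lt; apply: (big_ind (fun v => v < c)) => // u v.
by rewrite gt_max => ->.
Qed.

Lemma A1_in theta r n (x : 'I_n -> R) y (a b : R) :
  a <= 1 <= b -> (forall i, a <= x i <= b) -> a <= A1 theta r x y <= b.
Proof.
rewrite /A1 => ab x_in.
case: (accept_firstP (Phi1 theta r y) [seq x i | i <- enum 'I_n]).
  by move=> [-> _].
by move=> [_ /mapP[i _ ->]].
Qed.

Lemma A1_cases theta r n (x : 'I_n -> R) y : 1 < Phi1 theta r y ->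
  (A1 theta r x y = 1 /\ maxprice x < Phi1 theta r y) \/
  Phi1 theta r y <= A1 theta r x y.
Proof.
rewrite /A1 => Phi1_gt1.
case: (accept_firstP (Phi1 theta r y) [seq x i | i <- enum 'I_n]).
  move=> [-> /allP x_lt]; left; split=> //; apply: maxprice_lt => // i.
  by apply: x_lt; rewrite map_f ?mem_enum.
by move=> [le_A1 _]; right.
Qed.

End one_max.

Section threshold.
Variables (R : realType) (theta r : R).
Hypotheses (theta_gt1 : 1 < theta) (rtheta_gt1 : 1 < r * theta)
  (r2theta_le1 : r ^+ 2 * theta <= 1).

Let theta_gt0 : 0 < theta.
Proof. exact: lt_trans theta_gt1. Qed.

Lemma r_gt0 : 0 < r.
Proof. by rewrite -(pmulr_lgt0 _ theta_gt0) (lt_trans ltr01 rtheta_gt1). Qed.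

Let r_rtheta_le1 : r * (r * theta) <= 1.
Proof. by rewrite mulrA -expr2. Qed.

Lemma r_lt1 : r < 1.
Proof. by apply: lt_le_trans r_rtheta_le1; rewrite ltr_pMr ?r_gt0. Qed.

Let r1_neq0 : 1 - r != 0.
Proof. by rewrite subr_eq0 eq_sym lt_eqF ?r_lt1. Qed.

Let rtheta_gt0 : 0 < r * theta.
Proof. exact: lt_trans rtheta_gt1. Qed.

Lemma phi_rE y : phi_r theta r y =
  ((r * theta - 1) * (r * theta) + (1 - r * (r * theta)) * y)
  / ((1 - r) * (r * theta)).
Proof. by rewrite /phi_r; field; rewrite (gt_eqF theta_gt0) (gt_eqF r_gt0) r1_neq0. Qed.

Let denom_gt0 : 0 < (1 - r) * (r * theta).
Proof. by rewrite mulr_gt0 ?subr_gt0 ?r_lt1. Qed.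

Lemma le_rtheta_phi_r y : y <= theta -> y <= r * theta * phi_r theta r y.
Proof.
move=> y_le; rewrite phi_rE mulrA ler_pdivlMr //.
have rtheta_ge0 : 0 <= r * theta * (r * theta - 1).
  by rewrite mulr_ge0 ?subr_ge0 ?ltW.
have theta_y_ge0 : 0 <= r * (theta - y) by rewrite mulr_ge0 ?subr_ge0 ?(ltW r_gt0).
have := mulr_ge0 rtheta_ge0 theta_y_ge0; nra.
Qed.

Lemma phi_r_le_rtheta y : y <= r * theta -> phi_r theta r y <= r * theta.
Proof.
move=> y_le; rewrite phi_rE ler_pdivrMr //.
have : (1 - r * (r * theta)) * (r * theta - y) >= 0.
  by rewrite mulr_ge0 ?subr_ge0.
nra.
Qed.

Lemma phi_r_le y : r * theta <= y -> phi_r theta r y <= y.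
Proof.
move=> y_ge; rewrite phi_rE ler_pdivrMr //.
have : (r * theta - 1) * (y - r * theta) >= 0.
  by rewrite mulr_ge0 ?subr_ge0 ?(ltW rtheta_gt1).
nra.
Qed.

(* t decreases from 1 at y = r theta to 0 at y = theta. *)
Lemma phi_r_conv y : 0 < y ->
  let t := (r * theta / y - r) / (1 - r) in
  phi_r theta r y = y * (t * 1 + (1 - t) * (r * theta)^-1)
  /\ r * theta = y * (t * 1 + (1 - t) * r).
Proof.
move=> y0 t; split; rewrite /t ?phi_rE; field;
  by rewrite ?(gt_eqF theta_gt0) ?(gt_eqF r_gt0) ?(gt_eqF y0) ?r1_neq0.
Qed.

Variable s : R.
Hypotheses (s_ge1 : 1 <= s) (theta_le : theta <= (r * theta) `^ (s + 2)).

Lemma inv_powR_le_r : (r * theta)^-1 `^ (s + 1) <= r.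
Proof.
have ap0 : 0 < (r * theta) `^ (s + 1) by rewrite powR_gt0.
rewrite -(powR_inv1 (ltW rtheta_gt0)) -powRrM mulN1r powRN.
rewrite -(ler_pM2l ap0) mulfV ?gt_eqF // -(ler_pM2r theta_gt0) mul1r.
apply: (le_trans theta_le); rewrite -mulrA (_ : s + 2 = (s + 1) + 1); last ring.
by rewrite powRD ?powRr1 ?(ltW rtheta_gt0) ?(gt_eqF rtheta_gt0) ?implybT.
Qed.

Lemma powR_le_rtheta_powR y z :
  r * theta <= y <= theta -> 0 <= z <= phi_r theta r y ->
  z `^ (s + 1) <= r * theta * y `^ s.
Proof.
move=> /andP[y_ge y_le] /andP[z0 z_le].
have y0 : 0 < y := lt_le_trans rtheta_gt0 y_ge.
have [phiE rthetaE] := phi_r_conv y y0.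
set t := (r * theta / y - r) / (1 - r) in phiE rthetaE.
have t01 : 0 <= t <= 1.
  have r_le : r <= r * theta / y by rewrite ler_pdivlMr // ler_pM2l ?r_gt0.
  have le1 : r * theta / y <= 1 by rewrite ler_pdivrMr ?mul1r.
  have r1_gt0 : 0 < 1 - r by rewrite subr_gt0 r_lt1.
  rewrite divr_ge0 ?ler_pdivrMr ?subr_ge0 ?(ltW r1_gt0) ?(ltW r_lt1) //=.
  by rewrite mul1r lerD2r.
have convex_step :
    (t * 1 + (1 - t) * (r * theta)^-1) `^ (s + 1) <= t * 1 + (1 - t) * r.
  have s1' : 1 <= s + 1 by rewrite lerDr (le_trans ler01).
  have ainv_ge0 : 0 <= (r * theta)^-1 by rewrite invr_ge0 ltW.
  apply: le_trans (powR_conv_le _ _ _ _ s1' t01 ler01 ainv_ge0) _.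
  rewrite powR1 lerD2l; apply: ler_wpM2l; last exact: inv_powR_le_r.
  by case/andP: t01; rewrite subr_ge0.
have phi_ge0 : 0 <= phi_r theta r y := le_trans z0 z_le.
have s0 : 0 <= s + 1 by rewrite addr_ge0 // (le_trans ler01).
apply: le_trans (ge0_ler_powR s0 _ _ z_le) _; rewrite ?nnegrE //.
have [t0 t1] := andP t01.
have w_ge0 : 0 <= t * 1 + (1 - t) * (r * theta)^-1.
  by rewrite mulr1 addr_ge0 // mulr_ge0 ?subr_ge0 // invr_ge0 ltW.
rewrite phiE powRM ?(ltW y0) //.
apply: le_trans (ler_wpM2l (powR_ge0 _ _) convex_step) _.
rewrite (_ : r * theta * y `^ s = y `^ (s + 1) * (t * 1 + (1 - t) * r)) //.
by rewrite rthetaE powRD ?powRr1 ?(ltW y0) ?(gt_eqF y0) ?implybT //; ring.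
Qed.

Lemma mulr_Ecomp_powR_le_rtheta z y : 1 <= y <= theta ->
  0 < z < Phi1 theta r y -> z * Ecomp z y `^ s <= r * theta.
Proof.
move=> /andP[y1 y_le] /andP[z0 z_lt]; have y0 := lt_le_trans ltr01 y1.
have [z_le|z_gt] := leP z (r * theta).
  apply: le_trans (mulr_Ecomp_powR_le _ _ _ s_ge1 z0 y0) _.
  by rewrite ge_min z_le.
move: z_lt; rewrite /Phi1 lt_max ltNge (ltW z_gt) /= => z_lt.
have y_ge : r * theta <= y.
  rewrite leNgt; apply/negP => /ltW/(phi_r_le_rtheta _).
  by rewrite leNgt (lt_trans z_gt).
have z_le : z <= y := ltW (lt_le_trans z_lt (phi_r_le _ y_ge)).
have ys0 : 0 < y `^ s by rewrite powR_gt0.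
rewrite EcompE ?z0 // -(ler_pM2r ys0) -mulrA -powRM ?divr_ge0 ?(ltW z0) ?(ltW y0) //.
rewrite mulfVK ?(gt_eqF y0) // -[z in z * _]powRr1 ?(ltW z0) // -powRD; last first.
  by rewrite (gt_eqF z0) implybT.
rewrite addrC; apply: powR_le_rtheta_powR => //; first by rewrite y_ge.
by rewrite (ltW z0) ltW.
Qed.

Lemma maxprice_Ecomp_le_A1 n (x : 'I_n -> R) y :
  (forall i, 1 <= x i <= theta) -> 1 <= y <= theta ->
  maxprice x * Ecomp (maxprice x) y `^ s <= r * theta * A1 theta r x y.
Proof.
move=> x_in /andP[y1 y_le].
have /andP[z1 _] : 1 <= maxprice x <= theta.
  by apply: maxprice_in; rewrite ?lexx ?ltW.
have [z0 y0] : 0 < maxprice x /\ 0 < y by split; apply: lt_le_trans ltr01 _.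
have Phi1_gt1 : 1 < Phi1 theta r y by rewrite lt_max rtheta_gt1.
case: (A1_cases _ _ _ x _ Phi1_gt1) => [[-> z_lt]|Phi1_le].
  by rewrite mulr1 mulr_Ecomp_powR_le_rtheta ?y1 ?z0.
apply: le_trans (mulr_Ecomp_powR_le _ _ _ s_ge1 z0 y0) _; rewrite ge_min.
apply/orP; right; apply: le_trans (le_rtheta_phi_r _ y_le) _.
by rewrite ler_pM2l // (le_trans _ Phi1_le) // le_max lexx orbT.
Qed.

End threshold.

Section parameters.
Context {R : realType}.
Variables (theta r : R).

Lemma sqr_r_theta_le1 : 0 < theta -> 0 < r -> r <= theta `^ (- 2^-1) ->
  r ^+ 2 * theta <= 1.
Proof.
move=> theta0 r0 r_le.
have sqr_powR : (theta `^ (- 2^-1)) ^+ 2 = theta^-1.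
  rewrite -powR_mulrn ?powR_ge0 // -powRrM mulNr mulVf ?pnatr_eq0 //.
  by rewrite powR_inv1 // ltW.
rewrite -ler_pdivlMr // div1r -sqr_powR.
by apply: lerXn2r; rewrite // nnegrE ?powR_ge0 // ltW.
Qed.

Lemma s_exp_ge1 : 1 <= s_exp theta r.
Proof. by rewrite /s_exp le_max lexx. Qed.

Lemma le_powR_s_exp : 1 < theta -> 1 < r * theta ->
  theta <= (r * theta) `^ (s_exp theta r + 2).
Proof.
move=> theta_gt1 rtheta_gt1; have rtheta0 : 0 < r * theta := lt_trans ltr01 rtheta_gt1.
have ln_rtheta0 : 0 < ln (r * theta) by rewrite ln_gt0.
have s_ge : ln theta / ln (r * theta) - 2 <= s_exp theta r.
  by rewrite /s_exp le_max lexx orbT.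
rewrite -ler_ln ?posrE ?powR_gt0 ?(lt_trans ltr01) // ln_powR -ler_pdivrMr //.
by rewrite -lerBlDr.
Qed.

End parameters.

Section measurability.
Context {R : realType}.

Lemma measurable_inv : measurable_fun [set: R] (@GRing.inv R).
Proof.
have -> : [set: R] = [set 0] `|` [set x : R | x != 0].
  by apply/seteqP; split => x //= _; case: (eqVneq x 0); [left | right].
apply/measurable_funU => //; first exact: open_measurable.
split.
  move=> _ B mB; have [B0|B0] := pselect (B 0^-1).
    by rewrite (_ : _ `&` _ = [set 0]) //; apply/seteqP; split => x /=; [case | move->].
  by rewrite (_ : _ `&` _ = set0) //; apply/seteqP; split => x //= [-> ?].
apply: open_continuous_measurable_fun => //.
by apply/in_setP => x /= x0; exact: inv_continuous.
Qed.

Lemma measurable_Ecomp_powR d (T : measurableType d) (f g : T -> R) (s : R) :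
  measurable_fun setT f -> measurable_fun setT g ->
  measurable_fun setT (fun t => Ecomp (f t) (g t) `^ s).
Proof.
move=> mf mg; apply: (measurableT_comp (measurable_powR _)).
by apply: measurable_minr; apply: measurable_funM => //;
  exact: measurableT_comp measurable_inv _.
Qed.

Lemma measurable_bigmax d (T : measurableType d) (I : Type) (l : seq I)
    (P : I -> T -> R) :
  (forall i, measurable_fun setT (P i)) ->
  measurable_fun setT (fun w => \big[Num.max/1]_(i <- l) P i w).
Proof.
move=> mP; elim: l => [|i l IH].
  by under eq_fun do rewrite big_nil; exact: measurable_cst.
by under eq_fun do rewrite big_cons; exact: measurable_maxr.
Qed.

End measurability.

Section integral_bounds.
Local Open Scope ereal_scope.
Context {d} {T : measurableType d} {R : realType}.

Lemma ge0_le_integralT (mu : {measure set T -> \bar R}) (f g : T -> \bar R) :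
  (forall x, 0 <= f x) -> (forall x, f x <= g x) ->
  \int[mu]_x f x <= \int[mu]_x g x.
Proof.
move=> f0 fg; have g0 x : 0 <= g x := le_trans (f0 x) (fg x).
rewrite !ge0_integralTE //; apply: ereal_sup_le => _ [h hf <-].
by exists h => //= x; exact: le_trans (hf x) (fg x).
Qed.

Lemma integral_prob_ge0_le (P : probability T R) (f : T -> \bar R) (M : R) :
  (forall x, 0 <= f x <= M%:E) -> 0 <= \int[P]_x f x <= M%:E.
Proof.
move=> f_in; rewrite integral_ge0 => [|x _]; last by case/andP: (f_in x).
apply: le_trans (ge0_le_integralT P _ (cst M%:E) _ _) _.
- by move=> x; case/andP: (f_in x).
- by move=> x; case/andP: (f_in x).
rewrite integral_cst //.
have -> : (P : {measure set T -> \bar R}) [set: T] = 1 := probability_setT P.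
by rewrite mule1.
Qed.

Lemma integral_prob_fin_num (P : probability T R) (f : T -> R) (M : R) :
  (forall x, 0 <= f x <= M)%R -> \int[P]_x (f x)%:E \is a fin_num.
Proof.
move=> f_in; have /andP[I0 IM] := integral_prob_ge0_le P (EFin \o f) M f_in.
by rewrite ge0_fin_numE // (le_lt_trans IM) ?ltry.
Qed.

Lemma Rintegral_fine_divr (mu : {measure set T -> \bar R}) (f : T -> \bar R) (c : R) :
  measurable_fun setT f -> (forall x, 0 <= f x) -> (forall x, f x \is a fin_num) ->
  (0 <= c)%R -> (\int[mu]_x (fine (f x) / c) = fine (\int[mu]_x f x) / c)%R.
Proof.
move=> mf f0 f_fin c0; rewrite /Rintegral.
under eq_integral do rewrite EFinM fineK //.
rewrite ge0_integralZr ?lee_fin ?invr_ge0 //.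
have : 0 <= \int[mu]_x f x by apply: integral_ge0 => x _.
case: (\int[mu]_x f x) => [v _| _ |//]; first by [].
rewrite mul0r; have [->|c_neq0] := eqVneq c 0%R; first by rewrite invr0 mule0.
by rewrite gt0_mulye // lte_fin invr_gt0 lt0r c_neq0.
Qed.

Lemma Rintegral_law (P : probability T R) (X : T -> R)
    (F : {measure set R -> \bar R}) (g : R -> R) (M : R) :
  measurable_fun setT X -> (forall A, measurable A -> F A = P (X @^-1` A)) ->
  measurable_fun setT g -> (forall w, `|g (X w)| <= M)%R ->
  (\int[F]_z g z = \int[P]_w g (X w))%R.
Proof.
move=> mX FE mg g_le; congr fine.
have gX_int : P.-integrable (X @^-1` setT) ((EFin \o g) \o X).
  rewrite preimage_setT.
  apply: (measurable_bounded_integrable (f := g \o X) measurableT).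
  - have -> : (P : {measure set T -> \bar R}) setT = 1 := probability_setT P.
    exact: ltry.
  - exact: measurableT_comp.
  - exists M; split; rewrite ?num_real // => x Mx y _ /=.
    by rewrite (le_trans (g_le y)) // ltW.
have := integral_pushforward mX ((measurable_EFinP _ _).2 mg) gX_int measurableT.
rewrite preimage_setT => <-.
by apply: eq_measure_integral => A mA _ /=; rewrite FE.
Qed.

End integral_bounds.

Section product_probability.
Local Open Scope ereal_scope.
Context {d1 d2} {T1 : measurableType d1} {T2 : measurableType d2} {R : realType}.
Context {P1 : probability T1 R} {P2 : probability T2 R}.

Lemma le_Rintegral_prod (A : set T2) (h g : T1 * T2 -> R) (c M : R) :
  measurable A -> P2 A = 1 -> measurable_fun setT h -> (0 <= c)%R ->
  (forall u, 0 <= h u <= M)%R -> (forall u, 0 <= g u <= M)%R ->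
  (forall u, A u.2 -> c * h u <= g u)%R ->
  (c * \int[P1 \x P2]_u h u <= \int[P1 \x P2]_u g u)%R.
Proof.
move=> mA PA1 mh c0 h_in g_in hg.
have mcA : measurable (~` A) := measurableC mA.
pose N := [set: T1] `*` ~` A.
have mN : measurable N by exact: measurableX.
have N0 : (P1 \x P2) N = 0.
  have cA0 : (P2 : {measure set T2 -> \bar R}) (~` A) = 0.
    by move: (probability_setC P2 mA); rewrite PA1 subee // => ->.
  by rewrite product_measure1E // cA0 mule0.
have h_fin := integral_prob_fin_num (P1 \x P2) h M h_in.
have g_fin := integral_prob_fin_num (P1 \x P2) g M g_in.
have h0 u : 0 <= (h u)%:E by rewrite lee_fin; case/andP: (h_in u).
have mch : measurable_fun setT (fun u => c%:E * (h u)%:E).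
  by apply/measurable_EFinP; apply: measurable_funM.
have le_int : \int[P1 \x P2]_u (c%:E * (h u)%:E) <= \int[P1 \x P2]_u (g u)%:E.
  rewrite (ge0_negligible_integral _ _ _ _ N0) // => [|u _]; last by rewrite mule_ge0.
  rewrite integral_mkcond; apply: ge0_le_integralT => u.
    by rewrite patchE; case: ifP => // _; rewrite mule_ge0.
  rewrite patchE; case: ifPn => [/set_mem [_ uN]|_]; last first.
    by rewrite lee_fin; case/andP: (g_in u).
  by rewrite -EFinM lee_fin; apply: hg; apply: contrapT => uA; apply: uN.
rewrite /Rintegral -[c in (c * _)%R]/(fine c%:E) -fineM //.
apply: fine_le => //; first by rewrite fin_numM.
by rewrite -ge0_integralZl //; exact/measurable_EFinP.
Qed.

End product_probability.

Section law_fubini.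
Context {R : realType} {d} {Omega : measurableType d}.
Variable G : probability R R.
Context {mu : probability Omega R} {F : probability R R}.
Context {X : Omega -> R} {M : R} {e : R -> R -> R}.
Hypotheses (mX : measurable_fun setT X)
  (FE : forall A, measurable A -> F A = mu (X @^-1` A))
  (X_in : forall w, 0 <= X w <= M)
  (me : measurable_fun setT (fun zy : R * R => e zy.1 zy.2))
  (e_in : forall z y, 0 <= e z y <= 1).

Let k (u : Omega * R) := X u.1 * e (X u.1) u.2.

Let mk : measurable_fun setT (EFin \o k).
Proof.
apply/measurable_EFinP; apply: measurable_funM; first exact: measurableT_comp.
exact: measurableT_comp me
  (measurable_fun_pair (measurableT_comp mX measurable_fst) measurable_snd).
Qed.

Let k_in u : 0 <= k u <= M.
Proof.
have /andP[X0 XM] := X_in u.1; have /andP[e0 e1] := e_in (X u.1) u.2.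
by rewrite mulr_ge0 // (le_trans _ XM) // ler_piMr.
Qed.

Let k0 u : (0 <= (k u)%:E)%E.
Proof. by rewrite lee_fin; case/andP: (k_in u). Qed.

Lemma le_Rintegral_prod_law (A : set R) (g : Omega * R -> R) (c : R) :
  measurable A -> G A = 1%E -> 0 <= c -> (forall u, 0 <= g u <= M) ->
  (forall w y, A y -> c * (X w * e (X w) y) <= g (w, y)) ->
  c * \int[(mu \x G)%E]_u k u <= \int[(mu \x G)%E]_u g u.
Proof.
move=> mA GA1 c0 g_in kg; apply: (le_Rintegral_prod _ _ _ _ M mA GA1) => //.
- exact/measurable_EFinP.
- by move=> [w y]; exact: kg.
Qed.

Lemma Rintegral_law_inner c : 0 <= c ->
  \int[G]_y ((\int[F]_z (z * e z y)) / c) = (\int[(mu \x G)%E]_u k u) / c.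
Proof.
move=> c0.
have inner y : \int[F]_z (z * e z y) = fine (\int[mu]_w (k (w, y))%:E).
  apply: (Rintegral_law _ _ _ _ M) => //.
    by apply: measurable_funM => //; exact: measurable_fun_pair1 _ _ me.
  by move=> w; have /andP[kw0 kwM] := k_in (w, y); rewrite ger0_norm.
under eq_Rintegral => y _ do rewrite inner.
rewrite Rintegral_fine_divr //.
- by rewrite /Rintegral (fubini_tonelli2 _ mk k0).
- exact: (@measurable_fun_fubini_tonelli_G _ _ _ _ _ mu _ mk k0).
- by move=> y; apply: integral_ge0.
- by move=> y; apply: (integral_prob_fin_num mu _ M) => w; exact: k_in.
Qed.

Lemma Rintegral_law_outer c : 0 <= c ->
  \int[F]_z (z * (\int[G]_y e z y) / c) = (\int[(mu \x G)%E]_u k u) / c.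
Proof.
move=> c0; set Lam := fun z => \int[G]_y e z y.
have me_y z : measurable_fun setT (fun y => (e z y)%:E).
  by apply/measurable_EFinP; exact: measurable_fun_pair2 _ _ me.
have e0 zy : (0 <= (e zy.1 zy.2)%:E)%E by rewrite lee_fin; case/andP: (e_in zy.1 zy.2).
have Lam_fin z : (\int[G]_y (e z y)%:E)%E \is a fin_num.
  by apply: (integral_prob_fin_num G _ 1) => y; exact: e_in.
have Lam_in z : 0 <= Lam z <= 1.
  have /andP[I0 I1] := integral_prob_ge0_le G (fun y => (e z y)%:E) 1
    (fun y => e_in z y).
  by rewrite /Lam /Rintegral fine_ge0 //= -lee_fin fineK.
have mLam : measurable_fun setT Lam.
  apply: measurableT_comp (fine_measurable measurableT) _.
  exact: (@measurable_fun_fubini_tonelli_F _ _ _ _ _ G _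
    ((measurable_EFinP _ _).2 me) e0).
rewrite (Rintegral_law mu X F _ (M / c)) //; last 2 first.
- by apply: measurable_funM => //; apply: measurable_funM.
- move=> w; have /andP[X0 XM] := X_in w; have /andP[L0 L1] := Lam_in (X w).
  rewrite ger0_norm ?mulr_ge0 ?invr_ge0 // ler_wpM2r ?invr_ge0 //.
  by rewrite (le_trans _ XM) // ler_piMr.
have outer w : X w * Lam (X w) = fine (\int[G]_y (k (w, y))%:E).
  have X0 : (0 <= (X w)%:E)%E by rewrite lee_fin; case/andP: (X_in w).
  transitivity (fine ((X w)%:E * \int[G]_y (e (X w) y)%:E)); first by rewrite fineM.
  by congr fine; rewrite -ge0_integralZl // => y _; exact: (e0 (X w, y)).
transitivity (\int[mu]_w (fine (\int[G]_y (k (w, y))%:E) / c)).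
  by apply: eq_Rintegral => w _; rewrite -outer.
rewrite Rintegral_fine_divr //.
- by rewrite /Rintegral (fubini_tonelli1 _ mk k0).
- exact: (@measurable_fun_fubini_tonelli_F _ _ _ _ _ G _ mk k0).
- by move=> w; apply: integral_ge0.
- by move=> w; apply: (integral_prob_fin_num G _ M) => y; exact: k_in.
Qed.

End law_fubini.

Theorem corollary3 (R : realType) (theta r : R) (n : nat)
  (d : measure_display) (Omega : measurableType d) (mu : probability Omega R)
  (P : 'I_n -> Omega -> R) (G : probability R R) (F : probability R R) :
  1 < theta ->
  theta^-1 < r -> r <= theta `^ (- 2^-1) ->
  (0 < n)%N ->
  (forall i, measurable_fun setT (P i)) ->
  (forall i w, 1 <= P i w <= theta) ->
  G `[1, theta] = 1%E ->
  (forall A : set R, measurable A ->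
     F A = mu ((fun w => maxprice (fun i => P i w)) @^-1` A)) ->
  let s := s_exp theta r in
  let EPstar := \int[mu]_w maxprice (fun i => P i w) in
  let Lambda := fun z => \int[G]_y (Ecomp z y `^ s) in
  let Upsilon := fun y => (\int[F]_z (z * Ecomp z y `^ s)) / EPstar in
  (\int[(mu \x G)%E]_wy A1 theta r (fun i => P i wy.1) wy.2) / EPstar
    >= (r * theta)^-1 * \int[G]_y Upsilon y
  /\ (r * theta)^-1 * \int[G]_y Upsilon y
     = (r * theta)^-1 * \int[F]_z (z * Lambda z / EPstar).
Proof.
(* [0 < n] is unused: for n = 0, P* and the payoff are both 1. *)
move=> theta_gt1 r_gt r_le _ mP P_in G1 FE s EPstar Lambda Upsilon.
have theta0 : 0 < theta by apply: lt_trans theta_gt1.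
have rtheta_gt1 : 1 < r * theta by rewrite -ltr_pdivrMr // div1r.
have r2 : r ^+ 2 * theta <= 1.
  by apply: sqr_r_theta_le1 => //; apply: lt_trans r_gt; rewrite invr_gt0.
have P_in0 i w : 0 <= P i w <= theta by case/andP: (P_in i w) => /(le_trans ler01) ->.
pose X w := maxprice (fun i => P i w).
have mX : measurable_fun setT X by apply: measurable_bigmax.
have X_in w : 0 <= X w <= theta by apply: maxprice_in; rewrite ?ler01 ?ltW.
have mE : measurable_fun setT (fun zy : R * R => Ecomp zy.1 zy.2 `^ s).
  exact: measurable_Ecomp_powR measurable_fst measurable_snd.
have E_in z y : 0 <= Ecomp z y `^ s <= 1.
  by apply/Ecomp_powR_ge0_le1/(le_trans ler01 (s_exp_ge1 _ _)).
have EP0 : 0 <= EPstar by apply: Rintegral_ge0 => w _; case/andP: (X_in w).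
have inner := Rintegral_law_inner G mX FE X_in mE E_in _ EP0.
split; last by rewrite inner (Rintegral_law_outer G mX FE X_in mE E_in _ EP0).
rewrite inner mulrA; apply: ler_wpM2r; first by rewrite invr_ge0.
apply: (le_Rintegral_prod_law G mX X_in mE E_in _ _ _ (measurable_itv _) G1).
- by rewrite invr_ge0 ltW // (lt_trans ltr01).
- by move=> [w y]; apply: A1_in; rewrite ?ler01 ?ltW.
move=> w y; rewrite /= in_itv /= => y_in.
rewrite ler_pdivrMl ?(lt_trans ltr01) //.
by apply: maxprice_Ecomp_le_A1 => //; [apply: s_exp_ge1 | apply: le_powR_s_exp].
Qed.
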